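(* Let $K=\mathbb{Z}/3$, let $G$ be a simple graph with edges $e_1,\dots,e_s$ ($s\ge1$), and let $X$, $C_X(d)$ be as in the context. For each integer $d$, let $\mathcal{B}_d$ be the set of monomials of $S$ of degree $d$ not divisible by the leading term (for the graded reverse lexicographic order with $t_1>\dots>t_s$) of any polynomial in the ideal $(I(X),t_s^2)$, with $\mathcal{B}_d=\emptyset$ for $d<0$, and let $\beta(d)=|\mathcal{B}_d|$. Then for every $d\ge0$, $$\dim_K C_X(d)=\sum_{i\ge0}\beta(d-2i).$$
   Context: Let $G$ be a simple graph with vertex set $\{1,\dots,n\}$ and a fixed ordering $e_1,\dots,e_s$ of its edges; edge $e_k$ is identified with the variable $t_k$ of $S=K[t_1,\dots,t_s]$, $K$ a finite field. Let $X\subseteq\mathbb{P}^{s-1}$ be the image of the projective torus $\{(x_1:\dots:x_n): x_i\neq0\}\subseteq\mathbb{P}^{n-1}$ under the map whose $k$-th coordinate is $x_ix_j$ when $e_k=\{i,j\}$. Order $X=\{P_1,\dots,P_m\}$. For $d\ge0$ the parameterized code of order $d$, $C_X(d)\subseteq K^m$, is the image of the space $S_d$ of homogeneous polynomials of degree $d$ under $f\mapsto \big(f(P_1)/f_0(P_1),\dots,f(P_m)/f_0(P_m)\big)$ with $f_0=t_1^d$. $I(X)\subseteq S$ is the ideal generated by homogeneous polynomials vanishing on $X$. *)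

From HB Require Import structures.
From mathcomp Require Import all_boot all_order all_algebra.
From mathcomp Require Import mpoly.
From Stdlib Require Import ClassicalEpsilon.

Set Implicit Arguments.
Unset Strict Implicit.
Unset Printing Implicit Defensive.

Import Order.TTheory GRing.Theory.
Local Open Scope ring_scope.

Notation K := 'F_3.

Definition pbool (P : Prop) : bool :=
  if excluded_middle_informative P then true else false.

Lemma pred_lt (s : nat) : (0 < s)%N -> (s.-1 < s)%N.
Proof. by move=> hs; rewrite ltn_predL. Qed.

(* indices of t_1 and t_s (0-based: 0 and s-1) *)
Definition t_first (s : nat) (hs : (0 < s)%N) : 'I_s := Ordinal hs.
Definition t_last (s : nat) (hs : (0 < s)%N) : 'I_s := Ordinal (pred_lt hs).

(* A simple graph on vertices 'I_n (i.e. {1..n}) with an ordering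
   e_1..e_s of its edges: each edge is a 2-element subset of the
   vertices, and distinct indices give distinct edges. *)
Definition simple_graph_edges (n s : nat) (e : 'I_s -> {set 'I_n}) : Prop :=
  (forall k, #|e k| = 2%N) /\ injective e.

(* Projective space P^{s-1}(K): the point of a nonzero vector v is its
   class {c v : c in K^*}. *)
Definition pclass (s : nat) (v : 'rV[K]_s) : {set 'rV[K]_s} :=
  [set c *: v | c in [set c : K | c != 0]].

(* projective torus of P^{n-1}: all coordinates nonzero *)
Definition torus (n : nat) : {set 'rV[K]_n} :=
  [set x : 'rV[K]_n | [forall i, x 0 i != 0]].

(* the monomial map: k-th coordinate x_i x_j with e_k = {i,j} *)
Definition edge_map (n s : nat) (e : 'I_s -> {set 'I_n}) (x : 'rV[K]_n)
  : 'rV[K]_s :=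
  \row_(k < s) \prod_(i in e k) x 0 i.

(* X, as a set of projective points *)
Definition Xset (n s : nat) (e : 'I_s -> {set 'I_n}) : {set {set 'rV[K]_s}} :=
  [set pclass (edge_map e x) | x in torus n].

Definition rep (s : nat) (P : {set 'rV[K]_s}) : 'rV[K]_s :=
  odflt 0 [pick v in P].

Definition evalv (s : nat) (v : 'rV[K]_s) (f : {mpoly K[s]}) : K :=
  meval (fun k => v 0 k) f.

(* codeword of f in C_X(d): (f(P_i)/f_0(P_i))_i, f_0 = t_1^d, with
   X = {P_1,..,P_m} ordered by enum. *)
Definition codeword (n s : nat) (hs : (0 < s)%N) (e : 'I_s -> {set 'I_n})
  (d : nat) (f : {mpoly K[s]}) : 'rV[K]_#|Xset e| :=
  \row_(i < #|Xset e|)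
    (evalv (rep (enum_val i)) f /
     evalv (rep (enum_val i)) ('X_(t_first hs) ^+ d)).

(* C_X(d) = image of S_d: spanned by the images of the degree-d monomials *)
Definition CX (n s : nat) (hs : (0 < s)%N) (e : 'I_s -> {set 'I_n}) (d : nat)
  : {vspace 'rV[K]_#|Xset e|} :=
  <<[seq codeword hs e d 'X_[bmnm m] |
       m <- enum [set: 'X_{1..s < d.+1}] & mdeg (bmnm m) == d]>>%VS.

Definition vanishes_on_X (n s : nat) (e : 'I_s -> {set 'I_n}) (f : {mpoly K[s]}) : Prop :=
  forall P, P \in Xset e -> forall v, v \in P -> evalv v f = 0.

(* generators of I(X): homogeneous polynomials vanishing on X *)
Definition IX_gen (n s : nat) (e : 'I_s -> {set 'I_n}) (f : {mpoly K[s]}) : Prop :=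
  (exists d : nat, f \is d.-homog) /\ vanishes_on_X e f.

Definition in_IX_ts2 (n s : nat) (hs : (0 < s)%N) (e : 'I_s -> {set 'I_n})
  (g : {mpoly K[s]}) : Prop :=
  exists (r : seq ({mpoly K[s]} * {mpoly K[s]})) (h : {mpoly K[s]}),
    (forall p, p \in r -> IX_gen e p.1) /\
    g = \sum_(p <- r) p.1 * p.2 + h * 'X_(t_last hs) ^+ 2.

(* graded reverse lexicographic order with t_1 > ... > t_s:
   grevlex_lt m1 m2 means m1 < m2 *)
Definition grevlex_lt (s : nat) (m1 m2 : 'X_{1..s}) : bool :=
  (mdeg m1 < mdeg m2)%N ||
  ((mdeg m1 == mdeg m2) &&
   [exists k : 'I_s, (m2 k < m1 k)%N &&
      [forall j : 'I_s, (k < j)%N ==> (m1 j == m2 j)]]).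

Definition grevlex_lead (s : nat) (g : {mpoly K[s]}) (u : 'X_{1..s}) : Prop :=
  g != 0 /\ u \in msupp g /\
  (forall u', u' \in msupp g -> u' = u \/ grevlex_lt u' u).

Definition in_B (n s : nat) (hs : (0 < s)%N) (e : 'I_s -> {set 'I_n})
  (d : nat) (m : 'X_{1..s}) : Prop :=
  mdeg m = d /\
  ~ (exists g u, in_IX_ts2 hs e g /\ grevlex_lead g u /\ (u <= m)%MM).

Definition beta (n s : nat) (hs : (0 < s)%N) (e : 'I_s -> {set 'I_n}) (d : nat) : nat :=
  #|[set m : 'X_{1..s < d.+1} | pbool (in_B hs e d (bmnm m))]|.

Section CXImage.
Variables (n s : nat) (hs : (0 < s)%N) (e : 'I_s -> {set 'I_n}) (d : nat).

Lemma codewordD f g : codeword hs e d (f + g) = codeword hs e d f + codeword hs e d g.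
Proof. by apply/matrixP=> i j; rewrite !mxE /evalv mevalD mulrDl. Qed.

Lemma codewordZ c f : codeword hs e d (c *: f) = c *: codeword hs e d f.
Proof. by apply/matrixP=> i j; rewrite !mxE /evalv mevalZ mulrA. Qed.

Lemma codeword_sum I (r : seq I) (P : pred I) (F : I -> {mpoly K[s]}) :
  codeword hs e d (\sum_(i <- r | P i) F i) = \sum_(i <- r | P i) codeword hs e d (F i).
Proof.
elim/big_rec2: _ => [|i y f _ <-]; last by rewrite codewordD.
by apply/matrixP=> i j; rewrite !mxE /evalv meval0 mul0r.
Qed.

Lemma CXP v : v \in CX hs e d <-> exists f : {mpoly K[s]}, f \is d.-homog /\ v = codeword hs e d f.
Proof.
set ms := [seq m <- enum [set: 'X_{1..s < d.+1}] | mdeg (bmnm m) == d].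
have -> : CX hs e d = <<[seq codeword hs e d 'X_[bmnm m] | m <- ms]>>%VS by [].
split.
- move=> /(coord_span (X := in_tuple _)) ->.
  set S := [seq codeword hs e d 'X_[bmnm m] | m <- ms].
  exists (\sum_(i < size S) coord (in_tuple S) i v *: 'X_[bmnm (nth bm0 ms i)]).
  split.
    apply: rpred_sum => i _; apply: rpredZ; rewrite dhomogX.
    have : nth bm0 ms i \in ms by apply: mem_nth; rewrite -(size_map (fun m => codeword hs e d 'X_[bmnm m])).
    by rewrite mem_filter => /andP[].
  rewrite codeword_sum; apply: eq_bigr => i _; rewrite codewordZ; congr (_ *: _).
  by rewrite /S (nth_map bm0) // -(size_map (fun m => codeword hs e d 'X_[bmnm m])).
- move=> [f [hf ->]]; rewrite (mpolyE f) codeword_sum big_seq.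
  apply: memv_suml => m /= msupp_m; rewrite codewordZ; apply: memvZ; apply: memv_span.
  have hm : mdeg m = d by move/dhomogP: hf => /(_ m msupp_m).
  have hb : (mdeg m < d.+1)%N by rewrite hm.
  apply/mapP; exists (BMultinom hb) => //.
  by rewrite mem_filter /= hm eqxx mem_enum in_setT.
Qed.
End CXImage.

From HB Require Import structures.
From mathcomp Require Import all_boot all_order all_algebra.
From mathcomp Require Import mpoly.
From mathcomp Require Import zify.
From Stdlib Require Import ClassicalEpsilon.

Set Implicit Arguments.
Unset Strict Implicit.
Unset Printing Implicit Defensive.

Import Order.TTheory GRing.Theory.
Local Open Scope ring_scope.

(* The codeword map is linear on forms of degree d, and since a form of degree d
   satisfies f(c v) = c^d f(v), it kills such a form exactly when the form vanishes
   on X.  Hence dim C_X(d) counts the degree-d monomials that are not grevlex-leading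
   monomials of forms vanishing on X: the images of these monomials span (reduce any
   other monomial by a vanishing form it leads) and are independent (a relation among
   them would be a vanishing form led by one of them).

   The coordinates of points of X are nonzero, so f vanishes on X iff f t_s^2 does,
   and for grevlex a form whose leading monomial is divisible by t_s^2 is itself
   divisible by t_s^2.  Thus m leads a vanishing form iff t_s^2 m does, and the
   standard monomials of (I(X), t_s^2) are those of I(X) with t_s-exponent < 2.
   Splitting the degree-d standard monomials of I(X) according to the exponent of t_s
   gives #std(d) = beta(d) + #std(d - 2), and the formula follows by induction. *)

Lemma pboolP (P : Prop) : reflect P (pbool P).
Proof. by rewrite /pbool; case: excluded_middle_informative => h; constructor. Qed.

Lemma mnm_le_mdeg s (m : 'X_{1..s}) i : (m i <= mdeg m)%N.
Proof. by rewrite mdegE (bigD1 i) //= leq_addr. Qed.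

Lemma mcoeff_pihomog (R : nzRingType) s d (p : {mpoly R[s]}) m :
  (pihomog mdeg d p)@_m = if mdeg m == d then p@_m else 0.
Proof.
rewrite pihomogE raddf_sum /= big_mkcond /=.
under eq_bigr do rewrite mcoeffZ mcoeffX.
case: (boolP (m \in msupp p)) => hm.
  rewrite (bigD1_seq m) ?msupp_uniq //= eqxx mulr1 big1 ?addr0; first by case: ifP.
  by move=> m' ne; case: ifP => // _; rewrite (negbTE ne) mulr0.
rewrite memN_msupp_eq0 // if_same big1 // => m' _.
case: ifP => // _; case: (eqVneq m' m) => [->|ne]; first by rewrite memN_msupp_eq0 // mul0r.
by rewrite mulr0.
Qed.

Lemma mpoly_dvdX (R : nzRingType) s (f : {mpoly R[s]}) w :
  {in msupp f, forall u, (w <= u)%MM} -> exists g, f = g * 'X_[w].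
Proof.
move=> hw; exists (\sum_(u <- msupp f) f@_u *: 'X_[u - w]).
rewrite mulr_suml {1}(mpolyE f) !big_seq; apply: eq_bigr => u hu.
by rewrite -scalerAl -mpolyXD submK // hw.
Qed.

Lemma dhomogMX (R : nzRingType) s (g : {mpoly R[s]}) w k :
  (g * 'X_[w] \is (mdeg w + k).-homog) = (g \is k.-homog).
Proof.
rewrite !dhomogE (perm_all _ (msuppMX _ _)) all_map.
by apply: eq_all => u /=; rewrite mdegD eqn_add2l.
Qed.

Section Grevlex.
Variable s : nat.
Implicit Types m : 'X_{1..s}.

Lemma grevlex_lt_irr m : ~~ grevlex_lt m m.
Proof. by apply/negP => /orP[|/andP[_ /existsP[k]]]; rewrite ltnn. Qed.

Lemma grevlex_lt_trans m2 m1 m3 :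
  grevlex_lt m1 m2 -> grevlex_lt m2 m3 -> grevlex_lt m1 m3.
Proof.
move=> /orP[h1|/andP[/eqP e1 /existsP[k1 /andP[a1 /forallP b1]]]]
       /orP[h2|/andP[/eqP e2 /existsP[k2 /andP[a2 /forallP b2]]]].
- by rewrite /grevlex_lt (ltn_trans h1 h2).
- by rewrite /grevlex_lt -e2 h1.
- by rewrite /grevlex_lt e1 h2.
apply/orP; right; rewrite e1 e2 eqxx /=.
have agree (j : 'I_s) : (maxn k1 k2 < j)%N -> m1 j = m3 j.
  by rewrite gtn_max => /andP[h1 h2]; move: (b1 j) (b2 j); rewrite h1 h2 => /eqP-> /eqP->.
apply/existsP; case: (ltngtP k1 k2) => [lt|gt|/val_inj eq].
- exists k2; move: (b1 k2); rewrite lt /= => /eqP->; rewrite a2 /=.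
  by apply/forallP=> j; apply/implyP=> hj; rewrite agree // (maxn_idPr (ltnW lt)).
- exists k1; move: (b2 k1); rewrite gt /= => /eqP<-; rewrite a1 /=.
  by apply/forallP=> j; apply/implyP=> hj; rewrite agree // (maxn_idPl (ltnW gt)).
- subst k2; exists k1; rewrite (ltn_trans a2 a1) /=.
  by apply/forallP=> j; apply/implyP=> hj; rewrite agree // maxnn.
Qed.

Lemma grevlex_lt_total m1 m2 : m1 != m2 -> grevlex_lt m1 m2 || grevlex_lt m2 m1.
Proof.
move=> ne; rewrite /grevlex_lt.
case: (ltngtP (mdeg m1) (mdeg m2)) => [//|_|ed]; first by rewrite orbT.
have [k0 hk0] : exists k0, m1 k0 != m2 k0.
  apply/existsP; apply: contraR ne => /existsPn h; apply/eqP/mnmP=> i.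
  by move: (h i); rewrite negbK => /eqP.
have [k hk kmax] := @arg_maxnP _ k0 (fun k => m1 k != m2 k) (fun k : 'I_s => (k : nat)) hk0.
have above : [forall j : 'I_s, (k < j)%N ==> (m1 j == m2 j)].
  apply/forallP=> j; apply/implyP; apply: contraTT => nj.
  by rewrite -leqNgt; exact: kmax.
rewrite /=.
case: (ltngtP (m1 k) (m2 k)) => [l|l|l]; last by rewrite l eqxx in hk.
- apply/orP; right; apply/existsP; exists k; rewrite l /=.
  by apply/forallP=> j; apply/implyP=> kj; move/forallP/(_ j): above; rewrite kj eq_sym.
- by apply/orP; left; apply/existsP; exists k; rewrite l.
Qed.

Lemma grevlex_lt_addl w m1 m2 :
  grevlex_lt (w + m1)%MM (w + m2)%MM = grevlex_lt m1 m2.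
Proof.
rewrite /grevlex_lt !mdegD ltn_add2l eqn_add2l; congr (_ || (_ && _)).
apply: eq_existsb => k; rewrite !mnmDE ltn_add2l; congr (_ && _).
by apply: eq_forallb => j; rewrite !mnmDE eqn_add2l.
Qed.

Lemma grevlex_lt_last (hs : (0 < s)%N) m1 m2 : mdeg m1 = mdeg m2 ->
  (m2 (t_last hs) < m1 (t_last hs))%N -> grevlex_lt m1 m2.
Proof.
move=> ed lt; apply/orP; right; rewrite ed eqxx /=; apply/existsP.
exists (t_last hs); rewrite lt /=; apply/forallP=> j; apply/implyP=> /= hj.
by move: (ltn_ord j) hj => /=; lia.
Qed.

Lemma exists_grevlex_max (r : seq 'X_{1..s}) : r != [::] ->
  exists2 u, u \in r & forall u', u' \in r -> u' = u \/ grevlex_lt u' u.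
Proof.
elim: r => // x r IH _.
case: (eqVneq r [::]) => [->|/IH [y yr ymax]].
  by exists x; rewrite ?mem_seq1 // => u'; rewrite mem_seq1 => /eqP; left.
case: (eqVneq x y) => [->|nxy].
  by exists y; rewrite ?inE ?eqxx // => u'; rewrite inE => /orP[/eqP->|/ymax]; [left|].
case/orP: (grevlex_lt_total nxy) => h.
  exists y; first by rewrite inE yr orbT.
  by move=> u'; rewrite inE => /orP[/eqP->|/ymax]; [right|].
exists x; first by rewrite inE eqxx.
move=> u'; rewrite inE => /orP[/eqP->|/ymax[->|h']]; [left|right|right] => //.
exact: grevlex_lt_trans h.
Qed.

Lemma exists_grevlex_lead (g : {mpoly K[s]}) : g != 0 -> exists u, grevlex_lead g u.
Proof.
move=> nz; have : msupp g != [::] by rewrite msupp_eq0.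
by case/exists_grevlex_max => u hu hmax; exists u.
Qed.

Lemma grevlex_lead_X w : grevlex_lead ('X_[w] : {mpoly K[s]}) w.
Proof.
rewrite /grevlex_lead -msupp_eq0 msuppX mem_seq1 eqxx.
by do 2!split=> //; move=> u'; rewrite mem_seq1 => /eqP; left.
Qed.

Lemma grevlex_leadMX (g : {mpoly K[s]}) u w :
  grevlex_lead (g * 'X_[w]) (w + u)%MM <-> grevlex_lead g u.
Proof.
have supp v : ((w + v)%MM \in msupp (g * 'X_[w])) = (v \in msupp g).
  by rewrite !mcoeff_msupp mcoeffMX.
have supp' u' : (u' \in msupp (g * 'X_[w])) = (u' \in [seq (w + v)%MM | v <- msupp g]).
  by rewrite (perm_mem (msuppMX _ _)).
split=> [[nzX [iu hu]]|[nz [iu hu]]].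
- have nz : g != 0 by apply: contraNneq nzX => ->; rewrite mul0r.
  split=> //; split; first by rewrite -supp.
  move=> u' /(map_f (fun v => w + v)%MM); rewrite -supp' => /hu.
  by rewrite grevlex_lt_addl => -[/addmI|]; [left|right].
- split; first by apply: contraTneq iu => h; rewrite -supp h mcoeff_msupp mcoeff0 eqxx.
  split; first by rewrite supp.
  by move=> u'; rewrite supp' => /mapP[v /hu[->|h] ->]; [left|right; rewrite grevlex_lt_addl].
Qed.

End Grevlex.

Section StandardMonomials.
Variables (s d : nat) (V : vectType K) (phi : {mpoly K[s]} -> V).
Hypothesis phiD : {morph phi : f g / f + g}.
Hypothesis phiZ : forall c f, phi (c *: f) = c *: phi f.

Lemma phi_sum (I : Type) (r : seq I) (P : pred I) (F : I -> {mpoly K[s]}) :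
  phi (\sum_(i <- r | P i) F i) = \sum_(i <- r | P i) phi (F i).
Proof.
elim/big_rec2: _ => [|i y f _ <-]; last by rewrite phiD.
by have := phiZ 0 0; rewrite !scale0r.
Qed.

Definition kernel_lead (m : 'X_{1..s}) : Prop :=
  exists f : {mpoly K[s]}, [/\ f \is d.-homog, phi f = 0 & grevlex_lead f m].

Definition std_monomials : {set 'X_{1..s < d.+1}} :=
  [set b | (mdeg (bmnm b) == d) && ~~ pbool (kernel_lead (bmnm b))].

Definition std_list : seq 'X_{1..s} := [seq bmnm b | b <- enum std_monomials].

Definition std_images : seq V := [seq phi 'X_[u] | u <- std_list].

Lemma mem_std_list u : u \in std_list -> mdeg u = d /\ ~ kernel_lead u.
Proof.
case/mapP => b; rewrite mem_enum inE => /andP[/eqP hd /negP nlead] ->.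
by split=> // /pboolP.
Qed.

Lemma phiX_kernel_lead f u : phi f = 0 -> grevlex_lead f u ->
  phi 'X_[u] = - ((f@_u)^-1 *: \sum_(x <- msupp f | x != u) f@_x *: phi 'X_[x]).
Proof.
move=> f0 [_ [iu _]]; have cu : f@_u != 0 by rewrite -mcoeff_msupp.
move: f0; rewrite {1}(mpolyE f) phi_sum.
under eq_bigr do rewrite phiZ.
rewrite (bigD1_seq u) ?msupp_uniq //= => /eqP; rewrite addr_eq0 => /eqP E.
by rewrite -scalerN -E scalerA mulVf // scale1r.
Qed.

Lemma std_span_X u : mdeg u = d -> phi 'X_[u] \in <<std_images>>%VS.
Proof.
have [k] := ubnP #|[set b : 'X_{1..s < d.+1} | grevlex_lt (bmnm b) u]|.
elim: k u => // k IH u hk hu.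
case: (pboolP (kernel_lead u)) => [[f [hf f0 lf]]|nlead]; last first.
  have hb : (mdeg u < d.+1)%N by rewrite hu.
  apply/memv_span/map_f/mapP; exists (BMultinom hb) => //.
  by rewrite mem_enum inE /= hu eqxx; apply/negP => /pboolP.
rewrite (phiX_kernel_lead f0 lf) memvN; apply/memvZ.
rewrite big_seq_cond; apply: memv_suml => x /andP[hx nx]; apply/memvZ.
have ltx : grevlex_lt x u by case: (lf.2.2 x hx) => // ex; rewrite ex eqxx in nx.
have dx : mdeg x = d by rewrite (dhomog_mf hf hx).
apply: (IH x _ dx); rewrite -ltnS; apply: leq_trans hk; apply: proper_card.
have hbx : (mdeg x < d.+1)%N by rewrite dx.
apply/properP; split; last by exists (BMultinom hbx); rewrite !inE //= grevlex_lt_irr.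
by apply/subsetP => b; rewrite !inE => h; apply: grevlex_lt_trans ltx.
Qed.

Lemma homog_std_span f : f \is d.-homog -> phi f \in <<std_images>>%VS.
Proof.
move=> hf; rewrite (mpolyE f) phi_sum big_seq; apply: memv_suml => x hx.
by rewrite phiZ; apply/memvZ/std_span_X; rewrite (dhomog_mf hf hx).
Qed.

Lemma kernel_std_eq0 F : F \is d.-homog -> phi F = 0 ->
  {in msupp F, forall u, ~ kernel_lead u} -> F = 0.
Proof.
move=> hF F0 hstd; apply/eqP; apply: contraT => nzF.
have [u lu] := exists_grevlex_lead nzF.
by case: (hstd u lu.2.1); exists F.
Qed.

Lemma free_std_images : free std_images.
Proof.
set T := std_list.
have sz : size std_images = size T by rewrite size_map.
have uT : uniq T by rewrite map_inj_uniq ?enum_uniq //; exact: val_inj.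
suff : free (in_tuple std_images) by [].
apply/freeP => k hk.
pose F := \sum_(i < size std_images) k i *: ('X_[nth 0%MM T i] : {mpoly K[s]}).
have memT (i : 'I_(size std_images)) : nth 0%MM T i \in T by rewrite mem_nth // -sz.
have coefF (j : 'I_(size std_images)) : F@_(nth 0%MM T j) = k j.
  rewrite raddf_sum (bigD1 j) //= mcoeffZ mcoeffX eqxx mulr1 big1 ?addr0 // => i nij.
  by move: nij; rewrite -val_eqE mcoeffZ mcoeffX nth_uniq -?sz // => /negbTE ->; rewrite mulr0.
have F0 : F = 0.
  apply: kernel_std_eq0.
  - apply: rpred_sum => i _; apply: rpredZ; rewrite dhomogX.
    by case: (mem_std_list (memT i)) => /eqP.
  - rewrite phi_sum -[RHS]hk; apply: eq_bigr => i _.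
    by rewrite phiZ /= (nth_map 0%MM) // -sz.
  - move=> u uF; suff /mem_std_list[] : u \in T by [].
    apply: contraTT uF => uT'; rewrite mcoeff_msupp negbK raddf_sum big1 // => i _ /=.
    rewrite mcoeffZ mcoeffX; case: eqP => [hi|]; last by rewrite mulr0.
    by move: uT'; rewrite -hi memT.
by move=> i; rewrite -coefF F0 mcoeff0.
Qed.

End StandardMonomials.

Section LastVariable.
Variables (s : nat) (hs : (0 < s)%N).
Local Notation tl := (t_last hs).
Implicit Types u m : 'X_{1..s}.

Definition ts2 : 'X_{1..s} := (U_(tl) + U_(tl))%MM.

Lemma mdeg_ts2 : mdeg ts2 = 2%N.
Proof. by rewrite mdegD mdeg1. Qed.

Lemma ts2_le u : (2 <= u tl)%N -> (ts2 <= u)%MM.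
Proof. by move=> h; apply/mnm_lepP => i; rewrite mnmDE mnm1E; case: eqP => [<-|]. Qed.

Lemma ts2_addm_last u : (ts2 + u)%MM tl = (u tl).+2.
Proof. by rewrite !mnmDE mnm1E eqxx. Qed.

Lemma mpolyX_ts2 (R : nzRingType) : 'X_tl ^+ 2 = 'X_[ts2] :> {mpoly R[s]}.
Proof. by rewrite mpolyXD expr2. Qed.

Lemma mcoeffMX_ts2 (R : nzRingType) (h : {mpoly R[s]}) u :
  (u tl < 2)%N -> (h * 'X_[ts2])@_u = 0.
Proof.
move=> lu; apply: memN_msupp_eq0; rewrite (perm_mem (msuppMX _ _)).
by apply/mapP => -[v _ uv]; move: lu; rewrite uv ts2_addm_last.
Qed.

(* The defining property of grevlex: t_s^2 divides a form as soon as it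
   divides its leading monomial. *)
Lemma grevlex_lead_ts2 k (f : {mpoly K[s]}) m : f \is k.-homog ->
  grevlex_lead f (ts2 + m)%MM -> {in msupp f, forall u, (ts2 <= u)%MM}.
Proof.
move=> hf [_ [im hm]] u hu; apply: ts2_le; rewrite leqNgt; apply/negP => lt.
have gt : grevlex_lt (ts2 + m)%MM u.
  apply: grevlex_lt_last; first by rewrite !(dhomog_mf hf).
  by rewrite ts2_addm_last (leq_trans lt).
case: (hm u hu) => [eu|lt']; first by move: lt; rewrite eu ts2_addm_last.
by move: (grevlex_lt_trans gt lt'); rewrite (negbTE (grevlex_lt_irr _)).
Qed.

End LastVariable.

Section VanishingIdeal.
Variables (n s : nat) (hs : (0 < s)%N) (e : 'I_s -> {set 'I_n}).
Local Notation tl := (t_last hs).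
Local Notation van := (vanishes_on_X e).
Implicit Types (f g : {mpoly K[s]}) (u m : 'X_{1..s}).

Lemma vanishes0 : van 0.
Proof. by move=> P _ v _; rewrite /evalv meval0. Qed.

Lemma vanishesD f g : van f -> van g -> van (f + g).
Proof.
move=> hf hg P hP v hv; rewrite /evalv mevalD -/(evalv v f) -/(evalv v g).
by rewrite (hf P hP v hv) (hg P hP v hv) addr0.
Qed.

Lemma vanishesMr f g : van f -> van (f * g).
Proof. by move=> hf P hP v hv; rewrite /evalv mevalM -/(evalv v f) (hf P hP v hv) mul0r. Qed.

Lemma vanishes_sum (I : eqType) (r : seq I) (F : I -> {mpoly K[s]}) :
  {in r, forall i, van (F i)} -> van (\sum_(i <- r) F i).
Proof.
elim: r => [|x r IH] h; first by rewrite big_nil; exact: vanishes0.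
rewrite big_cons; apply: vanishesD; first by apply: h; rewrite inE eqxx.
by apply: IH => i hi; apply: h; rewrite inE hi orbT.
Qed.

Lemma Xset_coord_neq0 P v k : P \in Xset e -> v \in P -> v 0 k != 0.
Proof.
case/imsetP=> x; rewrite inE => /forallP hx -> /imsetP[c]; rewrite inE => nc ->.
by rewrite !mxE mulf_neq0 //; apply/prodf_neq0 => i _; exact: hx.
Qed.

Lemma vanishes_mulX g w : van (g * 'X_[w]) -> van g.
Proof.
move=> h P hP v hv.
have nzX : evalv v 'X_[w] != 0.
  rewrite /evalv mevalX; apply/prodf_neq0 => i _.
  by rewrite expf_neq0 // (Xset_coord_neq0 _ hP hv).
move: (h P hP v hv); rewrite /evalv mevalM -/(evalv v g) -/(evalv v 'X_[w]) => /eqP.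
by rewrite mulf_eq0 (negbTE nzX) orbF => /eqP.
Qed.

Lemma vanishes_pihomogM d k f g : f \is k.-homog -> van f ->
  van (pihomog mdeg d (f * g)).
Proof.
move=> hf vf; rewrite (pihomog_partitionE (mf := mdeg) (p := g) (k := msize g)) //.
rewrite mulr_sumr raddf_sum /=; apply: vanishes_sum => j _.
have hj : f * pihomog mdeg j g \is (k + j).-homog by apply: dhomogM => //; exact: pihomogP.
case: (eqVneq (k + j)%N d) => [<-|ne]; last by rewrite (pihomog_ne0 ne hj); exact: vanishes0.
by rewrite pihomog_dE //; apply: vanishesMr.
Qed.

Lemma evalv_scale d f (c : K) (v : 'rV[K]_s) :
  f \is d.-homog -> evalv (c *: v) f = c ^+ d * evalv v f.
Proof.
move=> /dhomogP hf; rewrite /evalv !mevalE mulr_sumr big_seq [RHS]big_seq.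
apply: eq_bigr => m hm; rewrite [RHS]mulrCA; congr (_ * _).
have -> : d = mdeg m by rewrite (hf m hm).
rewrite (mdegE m) -prodrXr -big_split /=; apply: eq_bigr => i _.
by rewrite mxE exprMn.
Qed.

Lemma evalvXn (v : 'rV[K]_s) i d : evalv v ('X_i ^+ d) = v 0 i ^+ d.
Proof. by rewrite /evalv rmorphXn /= mevalXU. Qed.

Lemma rep_in P : P \in Xset e -> rep P \in P.
Proof.
move=> hP; rewrite /rep; case: pickP => [v hv //|h].
case/imsetP: hP => x _ eP; move: (h (1 *: edge_map e x)); rewrite eP.
by move/negP; case; apply/imsetP; exists 1; rewrite ?inE ?oner_eq0.
Qed.

Lemma evalv_Xset_eq0 d f P v w : f \is d.-homog -> P \in Xset e ->
  v \in P -> w \in P -> evalv v f = 0 -> evalv w f = 0.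
Proof.
move=> hf /imsetP[x _ ->] /imsetP[c]; rewrite inE => nc -> /imsetP[c' _ ->].
rewrite !(evalv_scale _ _ hf) => /eqP; rewrite mulf_eq0 expf_eq0 (negbTE nc) andbF /=.
by move/eqP ->; rewrite mulr0.
Qed.

Lemma codeword_eq0 d f : f \is d.-homog -> codeword hs e d f = 0 <-> van f.
Proof.
move=> hf; split=> [h0 P hP v hv|hv]; last first.
  apply/matrixP => i j; rewrite !mxE.
  by rewrite (hv _ (enum_valP j) _ (rep_in (enum_valP j))) mul0r.
apply: (evalv_Xset_eq0 hf hP (rep_in hP) hv).
have := congr1 (fun M : 'rV[K]_#|Xset e| => M 0 (enum_rank_in hP P)) h0.
rewrite !mxE enum_rankK_in // evalvXn => /eqP.
have nz_den := Xset_coord_neq0 (t_first hs) hP (rep_in hP).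
by rewrite mulf_eq0 invr_eq0 expf_eq0 (negbTE nz_den) andbF orbF => /eqP.
Qed.

Definition IX_lead m : Prop :=
  exists f, [/\ f \is (mdeg m).-homog, van f & grevlex_lead f m].

Definition std_IX d : {set 'X_{1..s < d.+1}} :=
  [set b | (mdeg (bmnm b) == d) && ~~ pbool (IX_lead (bmnm b))].

Lemma kernel_lead_codeword d m : mdeg m = d ->
  kernel_lead d (codeword hs e d) m <-> IX_lead m.
Proof.
by move=> <-; split=> -[f [hf f0 lf]]; exists f; split=> //; apply/(codeword_eq0 hf).
Qed.

Lemma dim_CX d : \dim (CX hs e d) = #|std_IX d|.
Proof.
have cwD := codewordD hs e d; have cwZ := codewordZ hs e d.
have -> : CX hs e d = <<std_images d (codeword hs e d)>>%VS.
  apply/vspaceP => v; apply/idP/idP.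
  - by case/CXP => f [hf ->]; exact: homog_std_span.
  - move: v; apply/subvP/span_subvP => v /mapP[u /mem_std_list[du _] ->].
    by apply/CXP; exists 'X_[u]; rewrite dhomogX; split=> //; apply/eqP.
rewrite (eqP (free_std_images d cwD cwZ)) !size_map -cardE; apply: eq_card => b.
rewrite !inE; case: eqP => //= hd; congr (~~ _).
by apply/pboolP/pboolP => /(kernel_lead_codeword hd).
Qed.

Lemma IX_lead_ts2 m : IX_lead (ts2 hs + m)%MM <-> IX_lead m.
Proof.
split=> -[f [hf vf lf]]; last first.
  exists (f * 'X_[ts2 hs]); split; last exact/grevlex_leadMX.
  - by rewrite mdegD dhomogMX.
  - exact: vanishesMr.
have [g fg] := mpoly_dvdX (grevlex_lead_ts2 hf lf).
rewrite fg mdegD dhomogMX in hf; rewrite fg grevlex_leadMX in lf.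
by exists g; split=> //; apply: (@vanishes_mulX _ (ts2 hs)); rewrite -fg.
Qed.

Lemma in_IX_ts2_mulX g w : in_IX_ts2 hs e g -> in_IX_ts2 hs e (g * 'X_[w]).
Proof.
case=> r [h [hr ->]]; exists [seq (p.1, p.2 * 'X_[w]) | p <- r], (h * 'X_[w]).
split; first by move=> _ /mapP[p pr ->]; exact: (hr p pr).
rewrite mulrDl mulr_suml big_map mulrAC; congr (_ + _).
by apply: eq_bigr => p _; rewrite mulrA.
Qed.

(* The degree-(mdeg m) part of the I(X)-component of G agrees with G outside
   t_s^2 S, and grevlex puts every monomial of t_s^2 S of that degree below m. *)
Lemma in_IX_ts2_lead G m : in_IX_ts2 hs e G -> grevlex_lead G m -> (m tl < 2)%N ->
  IX_lead m.
Proof.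
case=> r [h [hr ->]] [_ [imG hmG]] small; rewrite mpolyX_ts2 in imG hmG.
set A := \sum_(p <- r) p.1 * p.2 in imG hmG.
have coefG u : (u tl < 2)%N -> (A + h * 'X_[ts2 hs])@_u = A@_u.
  by move=> lu; rewrite mcoeffD mcoeffMX_ts2 // addr0.
pose a := pihomog mdeg (mdeg m) A.
have am : a@_m != 0 by rewrite mcoeff_pihomog eqxx -coefG // -mcoeff_msupp.
exists a; split; first exact: pihomogP.
  rewrite /a raddf_sum /=; apply: vanishes_sum => p /hr [[k hk] vk].
  exact: vanishes_pihomogM hk vk.
split; first by apply: contraNneq am => ->; rewrite mcoeff0.
split=> [|u]; first by rewrite mcoeff_msupp.
rewrite mcoeff_msupp mcoeff_pihomog.
case: (mdeg u =P mdeg m) => [du au|_]; last by rewrite eqxx.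
case: (ltnP (u tl) 2) => lu; first by apply: hmG; rewrite mcoeff_msupp coefG.
by right; apply: grevlex_lt_last => //; exact: leq_trans small lu.
Qed.

Lemma in_BE d m : in_B hs e d m <-> [/\ mdeg m = d, ~ IX_lead m & (m tl < 2)%N].
Proof.
split=> [[hd nlead]|[hd nIX small]]; last first.
  split=> // -[g [u [Ig [lg um]]]]; apply: nIX.
  have lgX := (grevlex_leadMX g u (m - u)%MM).2 lg; rewrite submK // in lgX.
  exact: in_IX_ts2_lead (in_IX_ts2_mulX _ Ig) lgX small.
split=> //.
- case=> f [hf vf lf]; apply: nlead; exists f, m; split; last by split=> //; exact: lepm_refl.
  exists [:: (f, 1)], 0; split.
    by move=> p; rewrite mem_seq1 => /eqP -> /=; split=> //; exists (mdeg m).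
  by rewrite big_seq1 /= mulr1 mul0r addr0.
- rewrite ltnNge; apply/negP => big; apply: nlead; exists 'X_[ts2 hs], (ts2 hs).
  split; last by split; [exact: grevlex_lead_X | exact: ts2_le].
  by exists [::], 1; rewrite big_nil add0r mul1r mpolyX_ts2.
Qed.

Definition low_last d : {set 'X_{1..s < d.+1}} := [set b | (bmnm b tl < 2)%N].

Lemma beta_std_IX d : beta hs e d = #|std_IX d :&: low_last d|.
Proof.
apply: eq_card => b; rewrite !inE; apply/pboolP/idP.
- by case/in_BE => -> nlead ->; rewrite eqxx andbT; apply/negP => /pboolP.
- by case/andP => /andP[/eqP hd /negP nlead] small; apply/in_BE; split=> // /pboolP.
Qed.

Lemma std_IX_low d : (d < 2)%N -> std_IX d :\: low_last d = set0.
Proof.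
move=> d2; apply/setP => b; rewrite !inE.
case: (mdeg (bmnm b) =P d) => [hd|_]; last by rewrite andbF.
by rewrite (leq_ltn_trans (mnm_le_mdeg _ tl)) // hd.
Qed.

Lemma bmnm_ts2_addm_proof d (b : 'X_{1..s < d.+1}) : (mdeg (ts2 hs + b)%MM < d.+3)%N.
Proof. by rewrite mdegD mdeg_ts2 add2n !ltnS; case: b. Qed.

Definition bmnm_ts2_addm d (b : 'X_{1..s < d.+1}) : 'X_{1..s < d.+3} :=
  BMultinom (bmnm_ts2_addm_proof b).

Lemma card_std_IX_high d : #|std_IX d.+2 :\: low_last d.+2| = #|std_IX d|.
Proof.
rewrite -(@card_in_imset _ _ (@bmnm_ts2_addm d)); last first.
  by move=> b1 b2 _ _ /(congr1 val) /= /addmI /val_inj.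
apply: eq_card => x; apply/idP/idP.
- rewrite !inE -leqNgt => /andP[/ts2_le le /andP[/eqP hd /negP nlead]].
  have hdeg : mdeg (bmnm x - ts2 hs)%MM = d.
    by apply/eqP; rewrite -(eqn_add2l 2) -{1}(mdeg_ts2 hs) -mdegD addmC submK // hd.
  have hbd : (mdeg (bmnm x - ts2 hs)%MM < d.+1)%N by rewrite hdeg.
  apply/imsetP; exists (BMultinom hbd); last by apply: val_inj; rewrite /= addmC submK.
  rewrite inE /= hdeg eqxx /=; apply/negP => /pboolP /IX_lead_ts2.
  by rewrite addmC submK // => /pboolP.
- case/imsetP => b; rewrite !inE => /andP[/eqP hd /negP nlead] ->.
  rewrite /= ts2_addm_last mdegD mdeg_ts2 hd eqxx /=.
  by apply/negP => /pboolP /IX_lead_ts2 /pboolP.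
Qed.

Lemma card_std_IX d : #|std_IX d| = (\sum_(i < d./2.+1) beta hs e (d - 2 * i))%N.
Proof.
elim/ltn_ind: d => d IH; rewrite -(cardsID (low_last d)) -beta_std_IX.
case: d IH => [|[|d]] IH; try by rewrite std_IX_low // cards0 addn0 big_ord1.
rewrite card_std_IX_high IH // [RHS]big_ord_recl; congr (_ + _)%N.
by apply: eq_bigr => i _; rewrite lift0 /= mulnS add2n !subSS.
Qed.

End VanishingIdeal.

Theorem proposition2p2 (n s : nat) (hs : (0 < s)%N) (e : 'I_s -> {set 'I_n}) :
  simple_graph_edges e ->
  forall d : nat,
    \dim (CX hs e d) = (\sum_(i < d./2.+1) beta hs e (d - 2 * i))%N.
Proof. by move=> _ d; rewrite dim_CX card_std_IX. Qed.
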